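(* Let $m\in\mathbf{N}\cup\{\infty\}$, let $G$ be a group of isometries of the hyperbolic space $\mathbb{H}_m$, and let $f\in G$ be a parabolic isometry, with fixed point $\xi\in\partial\mathbb{H}_m$. Assume: (i) there are constants $C>0$, $C'>0$ and a point $x_0\in\mathbb{H}_m$ such that ${\sf{dist}}(f^n(x_0),x_0)\ge C\log n-C'$ for all sufficiently large $n$; (ii) there is a horoball $B$ centered at $\xi$ such that for every $g\in G$, either $gB=B$ or $gB\cap B=\emptyset$. Then $f$ is at most $n^{2/C}$-distorted in $G$: for every finitely generated subgroup $\Gamma\le G$ containing $f$, $\delta^\Gamma_f(n)\preceq n^{2/C}$. In particular $C\le2$, and if $C=2$ then $f$ is undistorted in $G$.
   Context: Model of $\mathbb{H}_m$: let $\mathcal{H}$ be a real Hilbert space of dimension $m+1$ with a unit vector $\mathbf{e}_0$ and Hilbert basis $(\mathbf{e}_i)_{i\in I}$ of $\mathbf{e}_0^\perp$; set $\langle u|u'\rangle=a_0a'_0-\sum_ia_ia'_i$. $\mathbb{H}_m$ is the sheet of $\{\langle u|u\rangle=1\}$ containing $\mathbf{e}_0$, with $\cosh{\sf{dist}}(u,u')=\langle u|u'\rangle$; boundary points are isotropic rays. Isometries are the elements of ${\sf{O}}(\langle\cdot|\cdot\rangle)$ preserving this sheet; an isometry is parabolic if it fixes no point of $\mathbb{H}_m$ but fixes an isotropic line, and has translation length $\inf_x{\sf{dist}}(x,h(x))=0$. For a boundary point given by an isotropic vector $\xi$ (with $\langle \xi|\mathbf{e}_0\rangle>0$) and $\epsilon>0$,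 the horoball is $H_\xi(\epsilon)=\{v\in\mathbb{H}_m: 0<\langle v|\xi\rangle<\epsilon\}$; a horoball centered at $\xi$ is any such set. Distortion: $f\preceq g$ means $f(x)\le Cg(C'x)+C''$ for constants; $\delta_{c,S}(n)=\sup\{k: c^k\in S^n\}$ for a finite symmetric generating set $S\ni1$ of $\Gamma$, with $\simeq$-class $\delta^\Gamma_c$; $c$ is undistorted in $G$ if $\delta^\Gamma_c(n)\preceq n$ for all finitely generated $\Gamma\le G$ containing $c$. *)

From Stdlib Require Import Reals Lra.
Open Scope R_scope.

Record Hilbert := {
  hV :> Type;
  h0 : hV;
  hadd : hV -> hV -> hV;
  hopp : hV -> hV;
  hscal : R -> hV -> hV;
  hip : hV -> hV -> R;
  haddA : forall x y z, hadd x (hadd y z) = hadd (hadd x y) z;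
  haddC : forall x y, hadd x y = hadd y x;
  hadd0 : forall x, hadd x h0 = x;
  haddN : forall x, hadd x (hopp x) = h0;
  hscalA : forall a b x, hscal a (hscal b x) = hscal (a * b) x;
  hscal1 : forall x, hscal 1 x = x;
  hscalDv : forall a x y, hscal a (hadd x y) = hadd (hscal a x) (hscal a y);
  hscalDs : forall a b x, hscal (a + b) x = hadd (hscal a x) (hscal b x);
  hipC : forall x y, hip x y = hip y x;
  hipD : forall x y z, hip (hadd x y) z = hip x z + hip y z;
  hipZ : forall a x y, hip (hscal a x) y = a * hip x y;
  hip_pos : forall x, x <> h0 -> 0 < hip x x;
  hcomplete : forall u : nat -> hV,
    (forall eps, 0 < eps -> exists N, forall p q, (N <= p)%nat -> (N <= q)%nat ->
        sqrt (hip (hadd (u p) (hopp (u q))) (hadd (u p) (hopp (u q)))) < eps) ->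
    exists l, forall eps, 0 < eps -> exists N, forall p, (N <= p)%nat ->
        sqrt (hip (hadd (u p) (hopp l)) (hadd (u p) (hopp l))) < eps
}.

Arguments h0 {_}. Arguments hadd {_}. Arguments hopp {_}. Arguments hscal {_}.
Arguments hip {_}.

Section Hyp.
Variable H : Hilbert.
Variable e0 : H.   (* unit vector; coordinates a_0 = (u|e0), rest in e0^perp *)

(** Minkowski form <u|u'> = a0 a0' - sum_i a_i a_i'  (= 2 a0 a0' - (u|u')) *)
Definition mink (u v : H) : R := 2 * hip u e0 * hip v e0 - hip u v.

(** The sheet H_m of {<u|u> = 1} containing e0. *)
Definition hyp (u : H) : Prop := mink u u = 1 /\ 0 < hip u e0.

(** cosh dist(u,u') = <u|u'>, i.e. dist = arcosh <u|u'>. *)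
Definition hdist (u v : H) : R :=
  ln (mink u v + sqrt (mink u v ^ 2 - 1)).

(** Boundary points: isotropic vectors xi with <xi|e0> > 0 (representing rays). *)
Definition boundary_vec (xi : H) : Prop := mink xi xi = 0 /\ 0 < mink xi e0.

Definition horoball (xi : H) (eps : R) (v : H) : Prop :=
  hyp v /\ 0 < mink v xi /\ mink v xi < eps.

Definition linear_map (L : H -> H) : Prop :=
  forall a x y, L (hadd (hscal a x) y) = hadd (hscal a (L x)) (L y).

Definition isometry (L : H -> H) : Prop :=
  linear_map L /\
  (forall x y, L x = L y -> x = y) /\ (forall y, exists x, L x = y) /\
  (forall x y, mink (L x) (L y) = mink x y) /\
  (forall x, hyp x -> hyp (L x)).

Definition parabolic (f : H -> H) : Prop :=
  isometry f /\
  ~ (exists x, hyp x /\ f x = x) /\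
  (exists xi lam, xi <> h0 /\ mink xi xi = 0 /\ f xi = hscal lam xi) /\
  (forall eps, 0 < eps -> exists x, hyp x /\ hdist x (f x) < eps).

Definition fixes_boundary (f : H -> H) (xi : H) : Prop :=
  boundary_vec xi /\ exists lam, 0 < lam /\ f xi = hscal lam xi.

Definition isom_group (G : (H -> H) -> Prop) : Prop :=
  (forall g, G g -> isometry g) /\
  G (fun x => x) /\
  (forall g h, G g -> G h -> G (fun x => g (h x))) /\
  (forall g, G g -> exists h, G h /\ forall x, h (g x) = x /\ g (h x) = x).

Definition sym_gen (S : list (H -> H)) (g : H -> H) : Prop :=
  (forall x, g x = x) \/
  (exists s, List.In s S /\ forall x, g x = s x) \/
  (exists s, List.In s S /\ forall x, g (s x) = x /\ s (g x) = x).

Fixpoint word_ball (S : list (H -> H)) (n : nat) (g : H -> H) : Prop :=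
  match n with
  | O => forall x, g x = x
  | S n' => exists s h, sym_gen S s /\ word_ball S n' h /\ forall x, g x = s (h x)
  end.

(** delta^Gamma_f(n) <= A * (A' n)^p + A'' for every finitely generated
    subgroup Gamma = <S> of G containing f, i.e. delta^Gamma_f ≼ n^p. *)
Definition distortion_at_most (G : (H -> H) -> Prop) (f : H -> H) (p : R) : Prop :=
  forall S : list (H -> H), (forall s, List.In s S -> G s) ->
    (exists n, word_ball S n f) ->
    exists A A' A'', 0 < A /\ 0 < A' /\
      forall n k : nat, word_ball S n (Nat.iter k f) ->
        INR k <= A * Rpower (A' * INR n) p + A''.

Definition undistorted (G : (H -> H) -> Prop) (f : H -> H) : Prop :=
  forall S : list (H -> H), (forall s, List.In s S -> G s) ->
    (exists n, word_ball S n f) ->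
    exists A A' A'', 0 < A /\ 0 < A' /\
      forall n k : nat, word_ball S n (Nat.iter k f) ->
        INR k <= A * (A' * INR n) + A''.

End Hyp.

(* The horoball condition forces every g in G to keep a point p of the horosphere
   <p|xi> = eps outside the open horoball: <g p|xi> >= eps.  Applied to f and f^-1 this also
   shows that f fixes the isotropic vector xi, not only its ray.  Between points with
   <y|xi>, <z|xi> >= eps the horospherical distance is bounded in terms of <y|z>, so each
   generator moves the translates g p a bounded horospherical distance, and a word of length n
   moves p a distance O(n).  Since f^k fixes xi, it moves x0 by the same horospherical
   distance, whose square is 2 (<f^k x0|x0> - 1) / <x0|xi>^2; hence cosh dist(f^k x0, x0) = O(n^2), and the lower bound
   C log k - C' on this distance gives k = O(n^(2/C)). *)

From Stdlib Require Import Reals Lra Classical List FunctionalExtensionality.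
Open Scope R_scope.

Arguments hadd0 {_}. Arguments hscal1 {_}.
Arguments hipC {_}. Arguments hipD {_}. Arguments hipZ {_}. Arguments hip_pos {_}.

Lemma ln_le (x y : R) : 0 < x -> x <= y -> ln x <= ln y.
Proof. intros hx [lt | ->]; [left; apply ln_increasing |]; lra. Qed.

Lemma exp_le (x y : R) : x <= y -> exp x <= exp y.
Proof. intros [lt | ->]; [left; apply exp_increasing |]; lra. Qed.

Lemma Rpower_1_le (x : R) : 0 <= x -> Rpower x 1 <= x + 1.
Proof.
  intros [hx | <-]; [rewrite Rpower_1; lra |].
  unfold Rpower, ln. destruct (Rlt_dec 0 0) as [abs |]; [exfalso; exact (Rlt_irrefl 0 abs) |].
  rewrite Rmult_0_r, exp_0. lra.
Qed.

Lemma quadratic_nonneg_discr (a b c : R) : 0 <= a -> 0 <= c ->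
  (forall t, 0 <= a + 2 * b * t + c * t * t) -> b * b <= a * c.
Proof.
  intros ha hc hq.
  destruct (Rle_lt_or_eq_dec 0 c hc) as [cpos | <-].
  - specialize (hq (- b / c)).
    replace (a + 2 * b * (- b / c) + c * (- b / c) * (- b / c)) with ((a * c - b * b) / c)
      in hq by (field; lra).
    assert (0 <= (a * c - b * b) / c * c) by (apply Rmult_le_pos; lra).
    replace ((a * c - b * b) / c * c) with (a * c - b * b) in * by (field; lra).
    lra.
  - destruct (Req_dec b 0) as [-> | bn]; [lra |].
    specialize (hq (- (a + 1) / (2 * b))).
    replace (a + 2 * b * (- (a + 1) / (2 * b)) + 0 * (- (a + 1) / (2 * b)) * (- (a + 1) / (2 * b)))
      with (-1) in hq by (field; lra).
    lra.
Qed.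

Lemma list_upper_bound {A : Type} (F : A -> R) (l : list A) :
  exists M, forall a, In a l -> F a <= M.
Proof.
  induction l as [| a l [M HM]]; [exists 0; easy |].
  exists (Rmax (F a) M). intros b [<- | hb]; [apply Rmax_l |].
  apply Rle_trans with M; [auto | apply Rmax_r].
Qed.

(* (1 - s^2) / (2 s e) is the xi-coefficient that keeps s y + b xi on the hyperboloid
   when <y|xi> = e (see [hyp_shift_isotropic] below). *)
Lemma shrink_below (a e K : R) : 0 < a < e ->
  exists s, 0 < s < 1 /\ s * a + (1 - s * s) / (2 * s * e) * K < e.
Proof.
  intros [ha hae]. pose proof (Rabs_pos K) as hK.
  set (u := (e - a) * e / (2 * (Rabs K + 1))).
  assert (hu : 0 < u) by (apply Rdiv_lt_0_compat; nra).
  exists (/ (1 + u)).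
  assert (hs : 0 < / (1 + u) < 1).
  { split; [apply Rinv_0_lt_compat; lra |]. rewrite <- Rinv_1. apply Rinv_lt_contravar; lra. }
  split; [exact hs |].
  set (b := (1 - / (1 + u) * / (1 + u)) / (2 * / (1 + u) * e)).
  assert (b0 : 0 <= b).
  { unfold b. replace (1 - / (1 + u) * / (1 + u)) with (u * (2 + u) / ((1 + u) * (1 + u)))
      by (field; lra).
    apply Rmult_le_pos; [apply Rmult_le_pos |]; try (left; apply Rinv_0_lt_compat); nra. }
  assert (bu : b <= u / e).
  { assert (E : u / e - b = u * u / (2 * (1 + u) * e)) by (unfold b; field; lra).
    assert (0 <= u * u / (2 * (1 + u) * e)); [| lra].
    apply Rmult_le_pos; [nra | left; apply Rinv_0_lt_compat; nra]. }
  assert (bK : b * K <= u / e * Rabs K).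
  { apply Rle_trans with (b * Rabs K); [apply Rmult_le_compat_l; [lra | apply Rle_abs] |].
    apply Rmult_le_compat_r; lra. }
  assert (uK : u / e * Rabs K <= (e - a) / 2).
  { replace (u / e * Rabs K) with ((e - a) / 2 * (Rabs K / (Rabs K + 1))) by (unfold u; field; lra).
    assert (Rabs K / (Rabs K + 1) <= 1); [| nra].
    apply Rmult_le_reg_r with (Rabs K + 1); [lra |].
    unfold Rdiv. rewrite Rmult_assoc, Rinv_l; lra. }
  assert (/ (1 + u) * a < a) by nra.
  lra.
Qed.

Lemma power_bound_of_log_bound (C C' c k n : R) : 0 < C -> 0 <= c -> 0 < k -> 0 <= n ->
  C * ln k - C' <= ln (2 * (1 + c * n ^ 2)) ->
  let A := exp ((C' + ln (2 * (1 + c))) / C) in k <= A * Rpower n (2 / C) + A.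
Proof.
  intros hC hc hk hn hlog A. replace (n ^ 2) with (n * n) in hlog by ring.
  assert (hA : 0 < A) by apply exp_pos.
  assert (0 < Rpower n (2 / C)) by apply exp_pos.
  rewrite <- (exp_ln k) by exact hk.
  destruct (Rlt_or_le n 1) as [n1 | n1].
  - assert (n * n <= 1) by nra.
    assert (c * (n * n) <= c) by (rewrite <- (Rmult_1_r c) at 2; apply Rmult_le_compat_l; lra).
    assert (ln (2 * (1 + c * (n * n))) <= ln (2 * (1 + c))) by (apply ln_le; nra).
    assert (exp (ln k) <= A); [| nra].
    apply exp_le. apply Rmult_le_reg_l with C; [lra |].
    replace (C * ((C' + ln (2 * (1 + c))) / C)) with (C' + ln (2 * (1 + c))) by (field; lra).
    lra.
  - assert (ln (2 * (1 + c * (n * n))) <= ln (2 * (1 + c)) + 2 * ln n).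
    { replace (2 * ln n) with (ln n + ln n) by ring.
      rewrite <- !ln_mult by nra. apply ln_le; nra. }
    assert (exp (ln k) <= A * Rpower n (2 / C)); [| lra].
    unfold A, Rpower. rewrite <- exp_plus. apply exp_le.
    apply Rmult_le_reg_l with C; [lra |].
    replace (C * ((C' + ln (2 * (1 + c))) / C + 2 / C * ln n))
      with (C' + ln (2 * (1 + c)) + 2 * ln n) by (field; lra).
    lra.
Qed.

Lemma power_sublinear_unbounded (A B q : R) : 0 < A -> q < 1 ->
  ~ (forall k : nat, INR k <= A * Rpower (INR k) q + B).
Proof.
  intros hA hq hk. set (r := 1 - q).
  destruct (INR_unbounded (Rmax (exp (ln (2 * A) / r)) (2 * Rabs B + 1))) as [k hkbig].
  pose proof (Rmax_l (exp (ln (2 * A) / r)) (2 * Rabs B + 1)).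
  pose proof (Rmax_r (exp (ln (2 * A) / r)) (2 * Rabs B + 1)).
  pose proof (Rle_abs B). pose proof (exp_pos (ln (2 * A) / r)).
  specialize (hk k). set (x := INR k) in *.
  assert (hx : 0 < x) by lra.
  assert (split : Rpower x q * Rpower x r = x).
  { rewrite <- Rpower_plus. replace (q + r) with 1 by (unfold r; ring). now apply Rpower_1. }
  assert (big : 2 * A <= Rpower x r).
  { rewrite <- (exp_ln (2 * A)) by lra. apply exp_le.
    apply Rmult_le_reg_l with (/ r); [apply Rinv_0_lt_compat; unfold r; lra |].
    rewrite <- Rmult_assoc, Rinv_l, Rmult_1_l by (unfold r; lra).
    rewrite Rmult_comm. fold (ln (2 * A) / r). rewrite <- (ln_exp (ln (2 * A) / r)).
    apply ln_le; lra. }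
  assert (0 < Rpower x q) by apply exp_pos.
  assert (A * Rpower x q * (2 * A) <= A * x) by (rewrite <- split; nra).
  assert (A * Rpower x q <= x / 2) by nra.
  lra.
Qed.

Section Minkowski.
Variables (H : Hilbert) (e0 : H).
Hypothesis he0 : hip e0 e0 = 1.
Local Notation mk := (mink H e0).

Lemma hip0l (z : H) : hip h0 z = 0.
Proof.
  assert (E : hip (hadd h0 h0) z = hip h0 z) by now rewrite hadd0.
  rewrite hipD in E. lra.
Qed.

Lemma hip_nonneg (v : H) : 0 <= hip v v.
Proof.
  destruct (classic (v = h0)) as [-> | nz].
  - rewrite hip0l; lra.
  - left; now apply hip_pos.
Qed.

Lemma hipDr (x y z : H) : hip z (hadd x y) = hip z x + hip z y.
Proof. now rewrite hipC, hipD, (hipC x), (hipC y). Qed.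

Lemma hipZr (a : R) (x y : H) : hip y (hscal a x) = a * hip x y.
Proof. now rewrite hipC, hipZ. Qed.

(* The inner product of the components in e0^⊥, so that mink x y = x_0 y_0 - perp_ip x y. *)
Definition perp_ip (x y : H) : R := hip x y - hip x e0 * hip y e0.

Lemma perp_ip_nonneg (x : H) : 0 <= perp_ip x x.
Proof.
  pose proof (hip_nonneg (hadd x (hscal (- hip x e0) e0))) as P.
  rewrite hipD, !hipDr, !hipZ, !hipZr, he0, (hipC e0 x) in P.
  unfold perp_ip. nra.
Qed.

Lemma perp_ip_cauchy_schwarz (x y : H) : perp_ip x y * perp_ip x y <= perp_ip x x * perp_ip y y.
Proof.
  apply quadratic_nonneg_discr; try apply perp_ip_nonneg.
  intro t. pose proof (perp_ip_nonneg (hadd x (hscal t y))) as P.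
  unfold perp_ip in *. rewrite hipD, !hipDr, !hipZ, !hipZr, hipD, hipZ, (hipC y x) in P.
  nra.
Qed.

Lemma mink_sym (x y : H) : mk x y = mk y x.
Proof. unfold mink. rewrite (hipC x y). ring. Qed.

Lemma mink_addl (x y z : H) : mk (hadd x y) z = mk x z + mk y z.
Proof. unfold mink. rewrite !hipD. ring. Qed.

Lemma mink_scall (a : R) (x z : H) : mk (hscal a x) z = a * mk x z.
Proof. unfold mink. rewrite !hipZ. ring. Qed.

Lemma mink_addr (x y z : H) : mk z (hadd x y) = mk z x + mk z y.
Proof. now rewrite mink_sym, mink_addl, (mink_sym x), (mink_sym y). Qed.

Lemma mink_scalr (a : R) (x z : H) : mk z (hscal a x) = a * mk z x.
Proof. now rewrite mink_sym, mink_scall, mink_sym. Qed.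

Lemma mink_perp_ip (x y : H) : mk x y = hip x e0 * hip y e0 - perp_ip x y.
Proof. unfold mink, perp_ip. ring. Qed.

Lemma mink_quad_ext (u v : H) : (forall w, mk u w = mk v w) -> mk u u = mk v v.
Proof. intros E. now rewrite E, mink_sym, E. Qed.

Lemma hdist_le_ln (x y : H) : 1 <= mk x y -> hdist H e0 x y <= ln (2 * mk x y).
Proof.
  intros h1. unfold hdist. apply ln_le.
  - pose proof (sqrt_pos (mk x y ^ 2 - 1)). lra.
  - assert (sqrt (mk x y ^ 2 - 1) <= mk x y); [| lra].
    rewrite <- (sqrt_pow2 (mk x y)) at 2 by lra. apply sqrt_le_1_alt. lra.
Qed.

End Minkowski.

Section Isometries.
Variables (H : Hilbert) (e0 : H).
Local Notation mk := (mink H e0).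

Lemma isometry_mink (g : H -> H) (x y : H) : isometry H e0 g -> mk (g x) (g y) = mk x y.
Proof. intros (_ & _ & _ & P & _). apply P. Qed.

Lemma isometry_hyp (g : H -> H) (x : H) : isometry H e0 g -> hyp H e0 x -> hyp H e0 (g x).
Proof. intros (_ & _ & _ & _ & P). apply P. Qed.

Lemma isometry_inj (g : H -> H) (x y : H) : isometry H e0 g -> g x = g y -> x = y.
Proof. intros (_ & P & _). apply P. Qed.

Lemma isometry_mink_h0 (g : H -> H) (z : H) : isometry H e0 g -> mk (g h0) z = 0.
Proof.
  intros (L & _). specialize (L 1 h0 h0). rewrite hscal1, hadd0 in L.
  assert (E : mk (g h0) z = mk (hadd (hscal 1 (g h0)) (g h0)) z) by now rewrite <- L.
  rewrite mink_addl, mink_scall in E. lra.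
Qed.

Lemma isometry_mink_lin (g : H -> H) (a b : R) (x y z : H) : isometry H e0 g ->
  mk (g (hadd (hscal a x) (hscal b y))) z = a * mk (g x) z + b * mk (g y) z.
Proof.
  intros I. pose proof I as (L & _).
  pose proof (L b y h0) as Ly. rewrite hadd0 in Ly.
  rewrite L, mink_addl, mink_scall, Ly, mink_addl, mink_scall, isometry_mink_h0 by exact I.
  ring.
Qed.

Variable G : (H -> H) -> Prop.
Hypothesis hG : isom_group H e0 G.

Lemma isom_group_isometry (g : H -> H) : G g -> isometry H e0 g.
Proof. destruct hG as [P _]. apply P. Qed.

Lemma isom_group_iter (f : H -> H) (k : nat) : G f -> G (Nat.iter k f).
Proof.
  destruct hG as (_ & Gid & Gcomp & _). intros hf.
  induction k as [| k IH]; [exact Gid |]. exact (Gcomp f _ hf IH).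
Qed.

Variable S : list (H -> H).
Hypothesis HS : forall s, In s S -> G s.

Lemma sym_gen_in_group (s : H -> H) : sym_gen H S s -> G s.
Proof.
  destruct hG as (_ & Gid & _ & Ginv).
  intros [E | [(s0 & In0 & E) | (s0 & In0 & E)]].
  - replace s with (fun x : H => x) by (extensionality x; now rewrite E). exact Gid.
  - replace s with s0 by (extensionality x; now rewrite E). now apply HS.
  - destruct (Ginv s0 (HS s0 In0)) as (h & Gh & Eh).
    replace s with h; [exact Gh |].
    extensionality x. destruct (E x) as [_ E2]. rewrite <- E2 at 1. apply Eh.
Qed.

Lemma word_ball_in_group (n : nat) (g : H -> H) : word_ball H S n g -> G g.
Proof.
  destruct hG as (_ & Gid & Gcomp & _).
  revert g. induction n as [| n IH]; intros g Wg; simpl in Wg.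
  - replace g with (fun x : H => x) by (extensionality x; now rewrite Wg). exact Gid.
  - destruct Wg as (s & h & Ss & Wh & E).
    replace g with (fun x => s (h x)) by (extensionality x; now rewrite E).
    apply Gcomp; [now apply sym_gen_in_group | now apply IH].
Qed.

Lemma sym_gen_mink_bound (p : H) : hyp H e0 p ->
  exists M, 0 <= M /\ forall s, sym_gen H S s -> mk (s p) p <= M.
Proof.
  intros [p1 _].
  destruct (list_upper_bound (fun s => mk (s p) p) S) as (M & HM).
  exists (Rmax 1 M). split; [pose proof (Rmax_l 1 M); lra |].
  pose proof (Rmax_l 1 M). pose proof (Rmax_r 1 M).
  intros s [E | [(s0 & In0 & E) | (s0 & In0 & E)]].
  - rewrite E, p1. lra.
  - rewrite E. specialize (HM s0 In0). lra.
  - rewrite <- (isometry_mink s0 (s p) p) by now apply isom_group_isometry, HS.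
    destruct (E p) as [_ ->]. rewrite mink_sym. specialize (HM s0 In0). lra.
Qed.

End Isometries.

Lemma word_ball_iter (H : Hilbert) (S : list (H -> H)) (f : H -> H) (k : nat) :
  In f S -> word_ball H S k (Nat.iter k f).
Proof.
  intros hf. induction k as [| k IH]; simpl; [easy |].
  exists f, (Nat.iter k f). split; [| split]; auto.
  right; left. now exists f.
Qed.

Section Isotropic.
Variables (H : Hilbert) (e0 : H) (xi : H).
Hypothesis he0 : hip e0 e0 = 1.
Hypothesis hxi : boundary_vec H e0 xi.
Local Notation mk := (mink H e0).

Lemma isotropic_time_pos : 0 < hip xi e0.
Proof. destruct hxi as [_ fut]. unfold mink in fut. rewrite he0 in fut. lra. Qed.

Lemma perp_ip_isotropic : perp_ip H e0 xi xi = hip xi e0 * hip xi e0.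
Proof. destruct hxi as [iso _]. rewrite mink_perp_ip in iso. lra. Qed.

Lemma mink_timelike_isotropic (q : H) : 0 < mk q q -> 0 < hip q e0 * mk q xi.
Proof.
  intros hq. rewrite mink_perp_ip in hq |- *.
  pose proof isotropic_time_pos. pose proof perp_ip_isotropic as sxi.
  pose proof (perp_ip_cauchy_schwarz H e0 he0 q xi) as cs.
  pose proof (perp_ip_nonneg H e0 he0 q).
  set (a := hip q e0) in *. set (c := hip xi e0) in *.
  set (s := perp_ip H e0 q xi) in *. set (sq := perp_ip H e0 q q) in *.
  rewrite sxi in cs.
  assert (a2 : 0 < a * a) by lra.
  assert ((a * s) * (a * s) < (a * a * c) * (a * a * c)).
  { replace ((a * s) * (a * s)) with ((a * a) * (s * s)) by ring.
    apply Rle_lt_trans with ((a * a) * (sq * (c * c))); [apply Rmult_le_compat_l; lra |].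
    replace ((a * a * c) * (a * a * c)) with ((a * a) * ((a * a) * (c * c))) by ring.
    apply Rmult_lt_compat_l; [lra |]. apply Rmult_lt_compat_r; nra. }
  assert (0 < a * a * c) by nra.
  nra.
Qed.

Lemma hyp_mink_isotropic_pos (q : H) : hyp H e0 q -> 0 < mk q xi.
Proof.
  intros [q1 q2]. pose proof (mink_timelike_isotropic q ltac:(lra)). nra.
Qed.

Lemma mink_isotropic_orth_nonpos (z : H) : mk z xi = 0 -> mk z z <= 0.
Proof.
  intros hz. rewrite mink_perp_ip in hz |- *.
  pose proof isotropic_time_pos. pose proof perp_ip_isotropic as sxi.
  pose proof (perp_ip_cauchy_schwarz H e0 he0 z xi) as cs.
  set (a := hip z e0) in *. set (c := hip xi e0) in *.
  set (sq := perp_ip H e0 z z) in *.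
  rewrite sxi in cs. replace (perp_ip H e0 z xi) with (a * c) in cs by lra.
  assert (a * a <= sq); [| lra].
  apply Rmult_le_reg_l with (c * c); nra.
Qed.

Lemma mink_isotropic_orth_cauchy_schwarz (u v : H) : mk u xi = 0 -> mk v xi = 0 ->
  mk u v * mk u v <= mk u u * mk v v.
Proof.
  intros hu hv.
  pose proof (mink_isotropic_orth_nonpos u hu). pose proof (mink_isotropic_orth_nonpos v hv).
  assert (K : - mk u v * - mk u v <= - mk u u * - mk v v); [| nra].
  apply quadratic_nonneg_discr; try lra.
  intro t.
  assert (ht : mk (hadd u (hscal t v)) xi = 0) by (rewrite mink_addl, mink_scall, hu, hv; ring).
  pose proof (mink_isotropic_orth_nonpos _ ht) as P.
  rewrite !mink_addl, !mink_addr, !mink_scall, !mink_scalr, (mink_sym H e0 v u) in P.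
  lra.
Qed.

Lemma mink_isotropic_orth_triangle (u v : H) : mk u xi = 0 -> mk v xi = 0 ->
  sqrt (- mk (hadd u v) (hadd u v)) <= sqrt (- mk u u) + sqrt (- mk v v).
Proof.
  intros hu hv.
  pose proof (mink_isotropic_orth_cauchy_schwarz u v hu hv) as cs.
  pose proof (mink_isotropic_orth_nonpos u hu). pose proof (mink_isotropic_orth_nonpos v hv).
  rewrite !mink_addl, !mink_addr, (mink_sym H e0 v u).
  assert (hX : 0 <= - mk u u) by lra. assert (hY : 0 <= - mk v v) by lra.
  replace (mk u u * mk v v) with (- mk u u * - mk v v) in cs by ring.
  set (X := - mk u u) in *. set (Y := - mk v v) in *.
  pose proof (sqrt_pos X). pose proof (sqrt_pos Y).
  pose proof (sqrt_sqrt X hX). pose proof (sqrt_sqrt Y hY).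
  assert (- mk u v <= sqrt X * sqrt Y).
  { destruct (Rle_or_lt (- mk u v) 0); [nra |].
    apply Rsqr_incr_0_var; [unfold Rsqr |]; nra. }
  rewrite <- (sqrt_square (sqrt X + sqrt Y)) by lra.
  apply sqrt_le_1_alt. unfold X, Y in *. nra.
Qed.

Lemma hyp_shift_isotropic (y : H) (a : R) : hyp H e0 y -> 0 < a ->
  let z := hadd (hscal a y) (hscal ((1 - a * a) / (2 * a * mk y xi)) xi) in
  hyp H e0 z /\ mk z xi = a * mk y xi.
Proof.
  intros hy ha z. pose proof (hyp_mink_isotropic_pos y hy).
  destruct hy as [y1 _]. destruct hxi as [iso _].
  assert (zxi : mk z xi = a * mk y xi) by (unfold z; rewrite mink_addl, !mink_scall, iso; ring).
  assert (zz : mk z z = 1).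
  { unfold z.
    rewrite !mink_addl, !mink_addr, !mink_scall, !mink_scalr, (mink_sym H e0 xi y), iso, y1.
    field. lra. }
  split; [split |]; auto.
  pose proof (mink_timelike_isotropic z ltac:(lra)) as sign. rewrite zxi in sign.
  apply (Rmult_lt_reg_r (a * mk y xi)); [apply Rmult_lt_0_compat |]; lra.
Qed.

Lemma exists_shift_on_horosphere (y : H) (e : R) : hyp H e0 y -> 0 < e ->
  exists a b, 0 < a /\ hyp H e0 (hadd (hscal a y) (hscal b xi)) /\
    mk (hadd (hscal a y) (hscal b xi)) xi = e.
Proof.
  intros hy he. pose proof (hyp_mink_isotropic_pos y hy).
  pose proof (hyp_shift_isotropic y (e / mk y xi) hy ltac:(apply Rdiv_lt_0_compat; lra)) as Z.
  cbv zeta in Z. destruct Z as [hz ez].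
  do 2 eexists. split; [| split; [exact hz |]].
  - apply Rdiv_lt_0_compat; lra.
  - rewrite ez. field. lra.
Qed.

(* Dividing by <y|xi> puts every point on the affine hyperplane <.|xi> = 1; differences of such
   points lie in xi^⊥, where -mink is a semi-norm: this is the horospherical distance. *)
Definition horo_diff (y z : H) : H :=
  hadd (hscal (/ mk y xi) y) (hscal (- / mk z xi) z).

Definition horo_dist (y z : H) : R := sqrt (- mk (horo_diff y z) (horo_diff y z)).

Lemma mink_horo_diff (y z w : H) : mk (horo_diff y z) w = mk y w / mk y xi - mk z w / mk z xi.
Proof. unfold horo_diff. rewrite mink_addl, !mink_scall. unfold Rdiv. ring. Qed.

Lemma horo_diff_orth (y z : H) : hyp H e0 y -> hyp H e0 z -> mk (horo_diff y z) xi = 0.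
Proof.
  intros hy hz. pose proof (hyp_mink_isotropic_pos y hy). pose proof (hyp_mink_isotropic_pos z hz).
  rewrite mink_horo_diff. field. lra.
Qed.

Lemma horo_dist_refl (y : H) : horo_dist y y = 0.
Proof.
  unfold horo_dist. rewrite mink_horo_diff. unfold Rminus. rewrite Rplus_opp_r, Ropp_0.
  apply sqrt_0.
Qed.

Lemma horo_dist_triangle (y0 y1 y2 : H) : hyp H e0 y0 -> hyp H e0 y1 -> hyp H e0 y2 ->
  horo_dist y0 y2 <= horo_dist y0 y1 + horo_dist y1 y2.
Proof.
  intros h0 h1 h2. unfold horo_dist.
  rewrite (mink_quad_ext H e0 (horo_diff y0 y2) (hadd (horo_diff y0 y1) (horo_diff y1 y2))).
  - apply mink_isotropic_orth_triangle; now apply horo_diff_orth.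
  - intro w. rewrite mink_addl, !mink_horo_diff. ring.
Qed.

Lemma horo_dist_sq (y z : H) : hyp H e0 y -> hyp H e0 z ->
  horo_dist y z ^ 2 =
    2 * mk y z / (mk y xi * mk z xi) - / (mk y xi * mk y xi) - / (mk z xi * mk z xi).
Proof.
  intros hy hz. pose proof (hyp_mink_isotropic_pos y hy). pose proof (hyp_mink_isotropic_pos z hz).
  unfold horo_dist. rewrite pow2_sqrt.
  2: { pose proof (mink_isotropic_orth_nonpos _ (horo_diff_orth y z hy hz)). lra. }
  destruct hy as [y1 _]. destruct hz as [z1 _].
  rewrite mink_horo_diff, (mink_sym H e0 y), (mink_sym H e0 z), !mink_horo_diff, y1, z1,
    (mink_sym H e0 z y).
  field. lra.
Qed.

Lemma horo_dist_le (y z : H) (eps M : R) : hyp H e0 y -> hyp H e0 z -> 0 < eps ->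
  eps <= mk y xi -> eps <= mk z xi -> 0 <= M -> mk y z <= M ->
  horo_dist y z <= sqrt (2 * M / (eps * eps)).
Proof.
  intros hy hz heps ey ez hM hyz.
  rewrite <- (sqrt_pow2 (horo_dist y z)) by apply sqrt_pos.
  apply sqrt_le_1_alt. rewrite horo_dist_sq by auto.
  set (a := mk y xi) in *. set (b := mk z xi) in *.
  assert (ab : eps * eps <= a * b) by nra.
  assert (0 <= / (a * a)) by (left; apply Rinv_0_lt_compat; nra).
  assert (0 <= / (b * b)) by (left; apply Rinv_0_lt_compat; nra).
  assert (2 * mk y z / (a * b) <= 2 * M / (a * b)).
  { apply Rmult_le_compat_r; [left; apply Rinv_0_lt_compat |]; nra. }
  assert (2 * M / (a * b) <= 2 * M / (eps * eps)).
  { apply Rmult_le_compat_l; [lra |]. apply Rinv_le_contravar; nra. }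
  lra.
Qed.

Lemma mink_horo_dist_same_level (y z : H) : hyp H e0 y -> hyp H e0 z -> mk y xi = mk z xi ->
  mk y z = 1 + mk z xi ^ 2 * horo_dist y z ^ 2 / 2.
Proof.
  intros hy hz level. pose proof (hyp_mink_isotropic_pos z hz).
  rewrite horo_dist_sq, level by auto. field. lra.
Qed.

Lemma horo_dist_isotropic_shift (F : H -> H) (y : H) (a b : R) :
  isometry H e0 F -> F xi = xi -> hyp H e0 y -> 0 < a ->
  let z := hadd (hscal a y) (hscal b xi) in horo_dist (F z) z = horo_dist (F y) y.
Proof.
  intros IF Fxi hy ha z. pose proof (hyp_mink_isotropic_pos y hy).
  assert (Fy : mk (F y) xi = mk y xi)
    by (rewrite <- (isometry_mink H e0 F y xi IF), Fxi; reflexivity).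
  unfold horo_dist. do 2 f_equal. apply mink_quad_ext. intro w.
  unfold z.
  rewrite !mink_horo_diff, !isometry_mink_lin, !mink_addl, !mink_scall, Fxi, Fy by exact IF.
  destruct hxi as [iso _]. rewrite iso.
  field. lra.
Qed.

End Isotropic.

Section Horoball.
Variables (H : Hilbert) (e0 : H) (G : (H -> H) -> Prop) (xi : H) (eps : R).
Hypothesis he0 : hip e0 e0 = 1.
Hypothesis hG : isom_group H e0 G.
Hypothesis hxi : boundary_vec H e0 xi.
Hypothesis heps : 0 < eps.
Hypothesis hB : forall g, G g ->
  (forall v, (exists w, horoball H e0 xi eps w /\ g w = v) <-> horoball H e0 xi eps v) \/
  (forall v, ~ ((exists w, horoball H e0 xi eps w /\ g w = v) /\ horoball H e0 xi eps v)).
Local Notation mk := (mink H e0).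

(* If t p entered the horoball B, then t B = B would put p inside B, while t B ∩ B = ∅ fails
   for the points of B just below p, which t keeps inside B by continuity. *)
Lemma horoball_orbit_out (p : H) (t : H -> H) :
  hyp H e0 p -> mk p xi = eps -> G t -> eps <= mk (t p) xi.
Proof.
  intros hp hpe Gt. pose proof (isom_group_isometry H e0 G hG t Gt) as It.
  assert (htp : hyp H e0 (t p)) by now apply isometry_hyp.
  pose proof (hyp_mink_isotropic_pos H e0 xi he0 hxi _ htp).
  apply Rnot_lt_le. intros lt.
  destruct (hB t Gt) as [inv | disj].
  - assert (tpB : horoball H e0 xi eps (t p)) by (split; [exact htp | lra]).
    apply inv in tpB as (w & (_ & _ & wB) & Ew).
    apply (isometry_inj H e0 t) in Ew; [subst w; lra | exact It].
  - destruct (shrink_below (mk (t p) xi) eps (mk (t xi) xi)) as (s & s01 & hs); [lra |].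
    pose proof (hyp_shift_isotropic H e0 xi he0 hxi p s hp ltac:(lra)) as Q.
    cbv zeta in Q. rewrite hpe in Q. destruct Q as [hq qxi].
    set (q := hadd (hscal s p) (hscal ((1 - s * s) / (2 * s * eps)) xi)) in *.
    assert (htq : hyp H e0 (t q)) by now apply isometry_hyp.
    apply (disj (t q)). split.
    + exists q. split; [split; [exact hq | rewrite qxi; split; nra] | reflexivity].
    + split; [exact htq | split].
      * now apply (hyp_mink_isotropic_pos H e0 xi he0 hxi).
      * unfold q. now rewrite isometry_mink_lin.
Qed.

Lemma horoball_stab_fixes_isotropic (p : H) (g : H -> H) (lam : R) :
  hyp H e0 p -> mk p xi = eps -> G g -> g xi = hscal lam xi -> g xi = xi.
Proof.
  intros hp hpe Gg gxi.
  pose proof (isom_group_isometry H e0 G hG g Gg) as Ig.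
  destruct hG as (_ & _ & _ & Ginv). destruct (Ginv g Gg) as (h & Gh & Eh).
  pose proof (isom_group_isometry H e0 G hG h Gh) as Ih.
  assert (gp : lam * mk (g p) xi = eps).
  { rewrite <- hpe, <- (isometry_mink H e0 g p xi Ig), gxi, mink_scalr. reflexivity. }
  assert (hp' : mk (h p) xi = lam * eps).
  { rewrite <- (proj1 (Eh xi)). rewrite isometry_mink, gxi, mink_scalr, hpe by exact Ih.
    reflexivity. }
  pose proof (horoball_orbit_out p g hp hpe Gg).
  pose proof (horoball_orbit_out p h hp hpe Gh).
  replace lam with 1 in gxi by nra. now rewrite gxi, hscal1.
Qed.

Lemma horo_dist_word_le (S : list (H -> H)) (p : H) (M : R) :
  (forall s, In s S -> G s) -> hyp H e0 p -> mk p xi = eps -> 0 <= M ->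
  (forall s, sym_gen H S s -> mk (s p) p <= M) ->
  forall n g t, word_ball H S n g -> G t ->
    horo_dist H e0 xi (t (g p)) (t p) <= INR n * sqrt (2 * M / (eps * eps)).
Proof.
  intros HS hp hpe hM HM n.
  assert (hyp_orbit : forall u, G u -> hyp H e0 (u p))
    by (intros u Gu; apply isometry_hyp; auto; now apply (isom_group_isometry H e0 G)).
  induction n as [| n IH]; intros g t Wg Gt; simpl in Wg.
  - rewrite Wg, horo_dist_refl. simpl. lra.
  - destruct Wg as (s & h & Ss & Wh & E). rewrite E, S_INR.
    assert (Gs : G s) by now apply (sym_gen_in_group H e0 G hG S).
    assert (Gts : G (fun x => t (s x))) by (destruct hG as (_ & _ & Gc & _); auto).
    assert (Gtsh : G (fun x => t (s (h x)))).
    { destruct hG as (_ & _ & Gc & _). apply (Gc (fun x => t (s x)) h Gts).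
      now apply (word_ball_in_group H e0 G hG S HS n). }
    pose proof (horo_dist_triangle H e0 xi he0 hxi (t (s (h p))) (t (s p)) (t p)
      (hyp_orbit _ Gtsh) (hyp_orbit _ Gts) (hyp_orbit _ Gt)) as tri.
    pose proof (IH h (fun x => t (s x)) Wh Gts) as far. cbv beta in far.
    assert (near : horo_dist H e0 xi (t (s p)) (t p) <= sqrt (2 * M / (eps * eps))).
    { apply (horo_dist_le H e0 xi he0 hxi);
        [exact (hyp_orbit _ Gts) | exact (hyp_orbit _ Gt) | exact heps
        | exact (horoball_orbit_out p _ hp hpe Gts) | exact (horoball_orbit_out p t hp hpe Gt)
        | exact hM |].
      rewrite isometry_mink by now apply (isom_group_isometry H e0 G). auto. }
    lra.
Qed.

Section Iterates.
Variables (f : H -> H) (x0 : H) (lam : R).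
Hypothesis hfG : G f.
Hypothesis hfxi : f xi = hscal lam xi.
Hypothesis hx0 : hyp H e0 x0.

Lemma iter_fixes_isotropic (k : nat) : Nat.iter k f xi = xi.
Proof.
  destruct (exists_shift_on_horosphere H e0 xi he0 hxi x0 eps hx0 heps) as (a & b & _ & hp & hpe).
  assert (fxi : f xi = xi) by exact (horoball_stab_fixes_isotropic _ f lam hp hpe hfG hfxi).
  induction k as [| k IH]; simpl; [reflexivity |]. now rewrite IH.
Qed.

Lemma mink_iter_word_bound (S : list (H -> H)) : (forall s, In s S -> G s) ->
  exists c, 0 <= c /\ forall n k, word_ball H S n (Nat.iter k f) ->
    1 <= mk (Nat.iter k f x0) x0 <= 1 + c * INR n ^ 2.
Proof.
  intros HS.
  destruct (exists_shift_on_horosphere H e0 xi he0 hxi x0 eps hx0 heps) as (a & b & ha & hp & hpe).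
  destruct (sym_gen_mink_bound H e0 G hG S HS _ hp) as (M & hM & HM).
  pose proof (hyp_mink_isotropic_pos H e0 xi he0 hxi x0 hx0) as hphi0.
  exists (mk x0 xi ^ 2 * M / (eps * eps)). split.
  { apply Rmult_le_pos; [apply Rmult_le_pos; [apply pow2_ge_0 | lra] |].
    left. apply Rinv_0_lt_compat. nra. }
  intros n k W. set (F := Nat.iter k f).
  assert (IF : isometry H e0 F)
    by apply (isom_group_isometry H e0 G hG), (isom_group_iter H e0 G hG), hfG.
  assert (hFx0 : hyp H e0 (F x0)) by now apply isometry_hyp.
  assert (Fphi : mk (F x0) xi = mk x0 xi).
  { rewrite <- (iter_fixes_isotropic k) at 1. apply isometry_mink, IF. }
  assert (hd : horo_dist H e0 xi (F x0) x0 <= INR n * sqrt (2 * M / (eps * eps))).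
  { rewrite <- (horo_dist_isotropic_shift H e0 xi he0 hxi F x0 a b IF (iter_fixes_isotropic k)
      hx0 ha).
    apply (horo_dist_word_le S _ M HS hp hpe hM HM n F (fun x => x) W).
    destruct hG as (_ & Gid & _). exact Gid. }
  assert (hd2 : horo_dist H e0 xi (F x0) x0 ^ 2 <= INR n ^ 2 * (2 * M / (eps * eps))).
  { rewrite <- (pow2_sqrt (2 * M / (eps * eps))), <- Rpow_mult_distr.
    - apply pow_incr. split; [apply sqrt_pos | exact hd].
    - apply Rmult_le_pos; [lra | left; apply Rinv_0_lt_compat; nra]. }
  rewrite (mink_horo_dist_same_level H e0 xi he0 hxi _ _ hFx0 hx0 Fphi).
  pose proof (pow2_ge_0 (horo_dist H e0 xi (F x0) x0)). pose proof (pow2_ge_0 (mk x0 xi)).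
  split; [nra |].
  replace (mk x0 xi ^ 2 * M / (eps * eps) * INR n ^ 2)
    with (mk x0 xi ^ 2 * (INR n ^ 2 * (2 * M / (eps * eps))) / 2) by (field; lra).
  nra.
Qed.

Lemma iterate_distortion_bound (S : list (H -> H)) (C C' : R) (N : nat) :
  (forall s, In s S -> G s) -> 0 < C ->
  (forall k, (N <= k)%nat -> hdist H e0 (Nat.iter k f x0) x0 >= C * ln (INR k) - C') ->
  exists A, 0 < A /\ forall n k, word_ball H S n (Nat.iter k f) ->
    INR k <= A * Rpower (INR n) (2 / C) + (A + INR N).
Proof.
  intros HS hC hgrowth.
  destruct (mink_iter_word_bound S HS) as (c & hc & Hc).
  exists (exp ((C' + ln (2 * (1 + c))) / C)). split; [apply exp_pos |].
  intros n k W. destruct (Hc n k W) as [m1 m2].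
  pose proof (pos_INR N). pose proof (pos_INR n).
  assert (0 < exp ((C' + ln (2 * (1 + c))) / C) * Rpower (INR n) (2 / C))
    by (apply Rmult_lt_0_compat; apply exp_pos).
  pose proof (exp_pos ((C' + ln (2 * (1 + c))) / C)).
  destruct (Nat.le_gt_cases N k) as [Nk | kN]; [| apply lt_INR in kN; lra].
  destruct (Nat.eq_dec k 0) as [-> | k0]; [simpl; lra |].
  assert (hk : 0 < INR k) by now apply lt_0_INR, Nat.neq_0_lt_0.
  assert (log_bound : C * ln (INR k) - C' <= ln (2 * (1 + c * INR n ^ 2))).
  { pose proof (hgrowth _ Nk). pose proof (hdist_le_ln H e0 _ _ m1).
    assert (ln (2 * mk (Nat.iter k f x0) x0) <= ln (2 * (1 + c * INR n ^ 2)))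
      by (apply ln_le; lra).
    lra. }
  pose proof (power_bound_of_log_bound C C' c (INR k) (INR n) hC hc hk (pos_INR n) log_bound).
  cbv zeta in *. lra.
Qed.

End Iterates.

End Horoball.

Theorem theorem4p1 (H : Hilbert) (e0 : H) (he0 : hip e0 e0 = 1)
  (G : (H -> H) -> Prop) (hG : isom_group H e0 G)
  (f : H -> H) (hfG : G f) (hf : parabolic H e0 f)
  (xi : H) (hxi : fixes_boundary H e0 f xi)
  (C C' : R) (x0 : H) (hC : 0 < C) (hC' : 0 < C') (hx0 : hyp H e0 x0)
  (hgrowth : exists N : nat, forall n : nat, (N <= n)%nat ->
      hdist H e0 (Nat.iter n f x0) x0 >= C * ln (INR n) - C')
  (hhoro : exists eps, 0 < eps /\ forall g, G g ->
      (forall v, (exists w, horoball H e0 xi eps w /\ g w = v) <-> horoball H e0 xi eps v) \/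
      (forall v, ~ ((exists w, horoball H e0 xi eps w /\ g w = v) /\ horoball H e0 xi eps v))) :
  distortion_at_most H G f (2 / C) /\ C <= 2 /\ (C = 2 -> undistorted H G f).
Proof.
  destruct hhoro as (eps & heps & hB). destruct hgrowth as (N & hgr).
  destruct hxi as [bxi (lam & _ & hfxi)].
  assert (bound : forall S, (forall s, In s S -> G s) -> exists A, 0 < A /\
    forall n k, word_ball H S n (Nat.iter k f) -> INR k <= A * Rpower (INR n) (2 / C) + (A + INR N))
    by (intros S HS; exact (iterate_distortion_bound H e0 G xi eps he0 hG bxi heps hB
      f x0 lam hfG hfxi hx0 S C C' N HS hC hgr)).
  pose proof (pos_INR N).
  split; [| split].
  - intros S HS _. destruct (bound S HS) as (A & hA & HA).
    exists A, 1, (A + INR N). repeat split; [lra | lra |].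
    intros n k W. rewrite Rmult_1_l. auto.
  - apply Rnot_lt_le. intros C2.
    destruct (bound (f :: nil)) as (A & hA & HA); [intros s [<- | []]; exact hfG |].
    apply (power_sublinear_unbounded A (A + INR N) (2 / C) hA).
    + apply Rmult_lt_reg_r with C; [lra |]. unfold Rdiv. rewrite Rmult_assoc, Rinv_l; lra.
    + intros k. apply HA, word_ball_iter. now left.
  - intros ->. intros S HS _. destruct (bound S HS) as (A & hA & HA).
    exists A, 1, (2 * A + INR N). repeat split; [lra | lra |].
    intros n k W. specialize (HA n k W). replace (2 / 2) with 1 in HA by field.
    pose proof (Rpower_1_le (INR n) (pos_INR n)). nra.
Qed.
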